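(* Let $\mathsf{k}$ be a field, $n\ge2$, $R=\mathsf{k}[x_1,\dots,x_r]$, $S=R[t]$, $A=\mathsf{k}[t]/(t^n)$, $F_B\in Q_R$ homogeneous of degree $j_B$, $I_B=\operatorname{Ann}_R(F_B)$, $B=R/I_B$. Let $G\in Q_R$ be homogeneous of degree $j_B+n-1$ and $F=T^{[n-1]}F_B+G\in Q_S$. Then $C=S/\operatorname{Ann}_S(F)$ is a free extension with base $A$ and fiber $B$ (via $\iota,\pi$) if and only if $(I_B)^2\circ G=0$.
   Context: $Q_R=\mathsf{k}_{DP}[X_1,\dots,X_r]$, $Q_S=\mathsf{k}_{DP}[X_1,\dots,X_r,T]$ divided power rings with contraction action ($x_i^s\circ X_i^{[k]}=X_i^{[k-s]}$ for $k\ge s$, else $0$; likewise $t$ on $T$); $\operatorname{Ann}$ denotes annihilator under this action. $\iota:A\to C$ is induced by $\mathsf{k}[t]\subset S$, $\pi:C\to B$ by $t\mapsto0$, $x_i\mapsto x_i$. $C$ is a free extension with base $A$ and fiber $B$ if $\iota$ makes $C$ a free $A$-module and $\pi$ is surjective with $\ker\pi=(\iota(A_+))C$. *)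

From HB Require Import structures.
From mathcomp Require Import all_boot all_order all_algebra.
Set Implicit Arguments. Unset Strict Implicit. Unset Printing Implicit Defensive.
Import GRing.Theory.
Local Open Scope ring_scope.

Definition mono (r : nat) := {ffun 'I_r -> nat}.
Definition madd r (m1 m2 : mono r) : mono r := [ffun i => (m1 i + m2 i)%N].
Definition mdeg r (m : mono r) : nat := (\sum_i m i)%N.
Definition m0 r : mono r := [ffun => 0%N].

Section Enc.
Variable k : fieldType.
Variable r : nat.

(* Q_R: an element is given by its coefficient function  m |-> coeff of X^[m].
   (Homogeneous elements automatically have finite support.) *)
Definition QR := mono r -> k.
(* Q_S: coefficient function (m, e) |-> coeff of X^[m] T^[e]. *)
Definition QS := mono r -> nat -> k.

Definition homogR (d : nat) (F : QR) : Prop :=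
  forall m, mdeg m <> d -> F m = 0.

(* Elements of R: formal finite k-linear combinations of monomials. *)
Definition Rpoly := seq (mono r * k).
(* Elements of S = R[t]: formal combinations of monomials x^m t^e. *)
Definition Spoly := seq ((mono r * nat) * k).

Definition addR (p q : Rpoly) : Rpoly := p ++ q.
Definition oppR (p : Rpoly) : Rpoly := [seq (u.1, - u.2) | u <- p].
Definition mulR (p q : Rpoly) : Rpoly :=
  [seq (madd u.1 v.1, u.2 * v.2) | u <- p, v <- q].
Definition addS (p q : Spoly) : Spoly := p ++ q.
Definition oppS (p : Spoly) : Spoly := [seq (u.1, - u.2) | u <- p].
Definition mulS (p q : Spoly) : Spoly :=
  [seq ((madd u.1.1 v.1.1, (u.1.2 + v.1.2)%N), u.2 * v.2) | u <- p, v <- q].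
Definition sumS (ps : seq Spoly) : Spoly := flatten ps.

(* Contraction action: x^a o X^[b] = X^[b-a] if a <= b, else 0; hence the
   coefficient of X^[m] in x^a o F is the coefficient of X^[m+a] in F. *)
Definition contrR (p : Rpoly) (F : QR) : QR :=
  fun m => \sum_(u <- p) u.2 * F (madd m u.1).
Definition contrS (p : Spoly) (F : QS) : QS :=
  fun m e => \sum_(u <- p) u.2 * F (madd m u.1.1) (e + u.1.2)%N.

Definition AnnR (F : QR) (p : Rpoly) : Prop := forall m, contrR p F m = 0.
Definition AnnS (F : QS) (p : Spoly) : Prop := forall m e, contrS p F m e = 0.

Definition sqIdeal (I : Rpoly -> Prop) (h : Rpoly) : Prop :=
  exists fg : seq (Rpoly * Rpoly),
    (forall u, u \in fg -> I u.1 /\ I u.2) /\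
    h = foldr (fun u acc => addR (mulR u.1 u.2) acc) [::] fg.

(* iota : A = k[t]/(t^n) -> C = S/Ann_S(F), induced by k[t] \subset S;
   an element of A is represented by a polynomial a : {poly k}. *)
Definition iotaS (a : {poly k}) : Spoly :=
  [seq ((m0 r, i), a`_i) | i <- iota 0 (size a)].

(* pi : C -> B = R/I_B, t |-> 0, x_i |-> x_i. *)
Definition piS (s : Spoly) : Rpoly :=
  [seq (u.1.1, u.2) | u <- s & u.1.2 == 0%N].

(* C = S/Ann_S(F) is a free extension with base A = k[t]/(t^n) and fiber
   B = R/Ann_R(FB), via iota and pi:
   (1) C is a free A-module via iota: there is a basis c_1..c_m of C such that
       every element of C is an A-combination sum_j iota(a_j) c_j, and such a
       combination vanishes in C only if every a_j vanishes in A (t^n | a_j);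
   (2) pi is surjective;
   (3) ker pi = (iota(A_+)) C, A_+ = (t) the maximal ideal of A. *)
Definition free_extension (n : nat) (F : QS) (FB : QR) : Prop :=
  (exists c : seq Spoly,
     (forall s : Spoly, exists a : seq {poly k},
        size a = size c /\
        AnnS F (addS s (oppS (sumS [seq mulS (iotaS p.1) p.2 | p <- zip a c]))))
     /\
     (forall a : seq {poly k}, size a = size c ->
        AnnS F (sumS [seq mulS (iotaS p.1) p.2 | p <- zip a c]) ->
        forall p, p \in a -> ('X^n %| p)))
  /\
  (forall b : Rpoly, exists s : Spoly, AnnR FB (addR (piS s) (oppR b)))
  /\
  (forall s : Spoly,
     AnnR FB (piS s) <->
     exists ac : seq ({poly k} * Spoly),
       (forall u, u \in ac -> u.1`_0 = 0) /\
       AnnS F (addS s (oppS (sumS [seq mulS (iotaS u.1) u.2 | u <- ac])))).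

End Enc.

(* Write [s = sum_i s_i t^i] for [s] in [S]. Then [s] annihilates
   [F = T^[n-1] FB + G] iff [s_i o FB = 0] for [i < n-1] and
   [s_(n-1) o FB + s_0 o G = 0]; hence everything reduces to the statement
   [I_B o G <= R o FB], which is equivalent to [I_B^2 o G = 0] because
   [Ann FB <= Ann H] forces [H] into [R o FB] (finite-dimensional linear algebra
   on the catalecticant matrix of [FB]).
   If [C] is a free extension, [g] in [I_B] lies in [ker pi], so [g] is congruent
   to a combination [sum t a_j c_j]; its [t^(n-1)]-component exhibits [g o G] in
   [R o FB]. Conversely, lifts of [b_j] in [R] with [b_j o FB] a basis of [R o FB]
   form an [A]-basis of [C]: the coefficients of [t^i] are read off degree by
   degree from the components [s_i], the only coupling being the [t^(n-1)]
   correction of [s_0 o G], which lies in [R o FB]. *)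

From mathcomp Require Import all_boot all_order all_algebra.
From mathcomp Require Import zify.
Set Implicit Arguments. Unset Strict Implicit. Unset Printing Implicit Defensive.
Import GRing.Theory.
Local Open Scope ring_scope.


Section Monomials.
Variable r : nat.
Implicit Types a b c : mono r.

Lemma maddC a b : madd a b = madd b a.
Proof. by apply/ffunP=> i; rewrite !ffunE addnC. Qed.

Lemma maddA a b c : madd a (madd b c) = madd (madd a b) c.
Proof. by apply/ffunP=> i; rewrite !ffunE addnA. Qed.

Lemma madd0l a : madd (m0 r) a = a.
Proof. by apply/ffunP=> i; rewrite !ffunE add0n. Qed.

Lemma mdeg_madd a b : mdeg (madd a b) = (mdeg a + mdeg b)%N.
Proof. by rewrite /mdeg -big_split /=; apply: eq_bigr => i _; rewrite ffunE. Qed.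

End Monomials.

Section Contraction.
Variables (k : fieldType) (r : nat).
Implicit Types (F G : QR k r) (p q : Rpoly k r).

Lemma contrR_addR p q F m : contrR (addR p q) F m = contrR p F m + contrR q F m.
Proof. by rewrite /contrR big_cat. Qed.

Lemma contrR_oppR p F m : contrR (oppR p) F m = - contrR p F m.
Proof. by rewrite /contrR big_map -sumrN; apply: eq_bigr => u _; rewrite mulNr. Qed.

Lemma eq_contrR p F F' :
  (forall m, F m = F' m) -> forall m, contrR p F m = contrR p F' m.
Proof. by move=> eFF' m; apply: eq_bigr => u _; rewrite eFF'. Qed.

Lemma contrR_mulR p q F m : contrR (mulR p q) F m = contrR p (contrR q F) m.
Proof.
rewrite /contrR /mulR big_allpairs_dep /=; apply: eq_bigr => u _.
by rewrite mulr_sumr; apply: eq_bigr => v _; rewrite mulrA maddA.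
Qed.

Lemma contrR_mulRC p q F m : contrR (mulR p q) F m = contrR (mulR q p) F m.
Proof.
rewrite /contrR /mulR !big_allpairs_dep /= exchange_big; apply: eq_bigr => v _.
by apply: eq_bigr => u _; rewrite [u.2 * _]mulrC [madd u.1 _]maddC.
Qed.

(* [(p g) o G = p o (f o FB) = f o (p o FB) = 0]. *)
Lemma sqIdeal_AnnR FB G :
  (forall g, AnnR FB g -> exists f, forall m, contrR g G m = contrR f FB m) ->
  forall h, sqIdeal (AnnR FB) h -> AnnR G h.
Proof.
move=> IG_sub h [fg [fgI ->]] m.
elim: fg fgI m => [|[p q] fg IHfg] fgI m /=; first by rewrite /contrR big_nil.
rewrite contrR_addR IHfg => [|u fg_u]; last by apply: fgI; rewrite inE fg_u orbT.
have [Ip Iq] := fgI (p, q) (mem_head _ _).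
have [f qG] := IG_sub q Iq.
rewrite addr0 /= contrR_mulR (eq_contrR p qG) -contrR_mulR.
by rewrite contrR_mulRC contrR_mulR; apply: big1 => u _; rewrite Ip mulr0.
Qed.

End Contraction.

Section TComponents.
Variables (k : fieldType) (r : nat).
Implicit Types (F : QR k r) (p : Rpoly k r) (s : Spoly k r) (a : {poly k}).

Definition tcoef (i : nat) s : Rpoly k r := [seq (u.1.1, u.2) | u <- s & u.1.2 == i].
Definition liftR p : Spoly k r := [seq ((u.1, 0%N), u.2) | u <- p].

Lemma contrR_tcoef i s F m :
  contrR (tcoef i s) F m = \sum_(u <- s | u.1.2 == i) u.2 * F (madd m u.1.1).
Proof. by rewrite /contrR big_map big_filter. Qed.

Lemma tcoef_addS i s s' : tcoef i (addS s s') = addR (tcoef i s) (tcoef i s').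
Proof. by rewrite /tcoef /addS filter_cat map_cat. Qed.

Lemma tcoef_oppS i s : tcoef i (oppS s) = oppR (tcoef i s).
Proof. by rewrite /tcoef /oppS /oppR filter_map -!map_comp. Qed.

Lemma contr_tcoef_sumS i (ss : seq (Spoly k r)) F m :
  contrR (tcoef i (sumS ss)) F m = \sum_(s <- ss) contrR (tcoef i s) F m.
Proof.
by rewrite contrR_tcoef /sumS big_flatten; apply: eq_bigr => s _; rewrite contrR_tcoef.
Qed.

Lemma tcoef_liftR i p : tcoef i (liftR p) = if i == 0%N then p else [::].
Proof.
rewrite /tcoef /liftR filter_map -map_comp; case: eqP => [->|/eqP i_neq0].
  by rewrite (eq_filter (a2 := predT)) // filter_predT map_id_in // => -[].
rewrite (eq_filter (a2 := pred0)) ?filter_pred0 // => u.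
by rewrite /= eq_sym (negbTE i_neq0).
Qed.

Lemma piS_liftR p : piS (liftR p) = p.
Proof. exact: (tcoef_liftR 0 p). Qed.

Lemma contr_tcoef_iotaS i a s F m :
  contrR (tcoef i (mulS (iotaS r a) s)) F m =
  \sum_(j < i.+1) a`_j * contrR (tcoef (i - j) s) F m.
Proof.
pose T j := if (j <= i)%N then a`_j * contrR (tcoef (i - j) s) F m else 0.
pose N := maxn (size a) i.+1.
have widenT M : (M <= N)%N -> (forall j, (M <= j)%N -> T j = 0) ->
    \sum_(0 <= j < M) T j = \sum_(0 <= j < N) T j.
  move=> MN TM; rewrite (big_nat_widen _ _ N) // big_mkcond; apply: eq_bigr => j _.
  by case: (ltnP j M) => [|/TM ->].
rewrite contrR_tcoef big_mkcond /mulS /iotaS big_allpairs_dep big_map /=.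
transitivity (\sum_(0 <= j < size a) T j).
  rewrite /index_iota subn0; apply: eq_bigr => j _; rewrite /T.
  case: leqP => ji; last by apply: big1 => v _; rewrite ifF //; lia.
  rewrite contrR_tcoef mulr_sumr [RHS]big_mkcond; apply: eq_bigr => v _.
  by rewrite -{1}(subnKC ji) eqn_add2l madd0l; case: ifP; rewrite ?mulr0 ?mulrA.
rewrite widenT ?leq_maxl // => [|j aj]; last by rewrite /T nth_default // mul0r if_same.
transitivity (\sum_(j < i.+1) T j).
  by rewrite -(big_mkord xpredT) widenT ?leq_maxr // => j ij; rewrite /T leqNgt ij.
by apply: eq_bigr => j _; rewrite /T -ltnS ltn_ord.
Qed.

Lemma contr_tcoef0_iotaS a s F m :
  contrR (tcoef 0 (mulS (iotaS r a) s)) F m = a`_0 * contrR (tcoef 0 s) F m.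
Proof. by rewrite contr_tcoef_iotaS big_ord1. Qed.

Lemma contr_tcoef_iotaS_liftR i a p F m :
  contrR (tcoef i (mulS (iotaS r a) (liftR p))) F m = a`_i * contrR p F m.
Proof.
rewrite contr_tcoef_iotaS big_ord_recr /= subnn tcoef_liftR /= big1 ?add0r // => j _.
by rewrite tcoef_liftR subn_eq0 leqNgt ltn_ord /contrR big_nil mulr0.
Qed.

Lemma contr_tcoef0_comb (ac : seq ({poly k} * Spoly k r)) F m :
  (forall u, u \in ac -> u.1`_0 = 0) ->
  contrR (tcoef 0 (sumS [seq mulS (iotaS r u.1) u.2 | u <- ac])) F m = 0.
Proof.
move=> ac0; rewrite contr_tcoef_sumS big_map big1_seq // => u /andP[_ u_ac].
by rewrite contr_tcoef0_iotaS ac0 // mul0r.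
Qed.

End TComponents.

Section Annihilator.
Variables (k : fieldType) (r n : nat) (FB G : QR k r).
Implicit Types (s : Spoly k r) (ac : seq ({poly k} * Spoly k r)).

Definition Fs : QS k r :=
  fun m e => (if e == n.-1 then FB m else 0) + (if e == 0%N then G m else 0).

Lemma contrS_Fs s m e : contrS s Fs m e =
  (if (e <= n.-1)%N then contrR (tcoef (n.-1 - e) s) FB m else 0) +
  (if e == 0%N then contrR (tcoef 0 s) G m else 0).
Proof.
rewrite /contrS /Fs; under eq_bigr => u _ do rewrite mulrDr.
rewrite big_split /=; congr (_ + _).
  case: leqP => e_le; last by apply: big1 => u _; rewrite ifF ?mulr0 //; lia.
  rewrite contrR_tcoef [RHS]big_mkcond; apply: eq_bigr => u _ /=.
  by rewrite -{1}(subnKC e_le) eqn_add2l; case: ifP; rewrite ?mulr0.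
case: eqP => [->|/eqP e_neq0]; last first.
  by apply: big1 => u _; rewrite addn_eq0 (negbTE e_neq0) mulr0.
rewrite contrR_tcoef [RHS]big_mkcond; apply: eq_bigr => u _ /=.
by rewrite add0n; case: ifP; rewrite ?mulr0.
Qed.

(* Components of [t]-degree at least [n] are invisible to [Fs]. *)
Lemma AnnS_FsP s : AnnS Fs s <->
  (forall i, (i < n.-1)%N -> AnnR FB (tcoef i s)) /\
  (forall m, contrR (tcoef n.-1 s) FB m + contrR (tcoef 0 s) G m = 0).
Proof.
split=> [Fs_s | [lowFB topFBG] m e].
  split=> [i i_lt m | m]; last by have := Fs_s m 0%N; rewrite contrS_Fs subn0 leq0n.
  rewrite -(Fs_s m (n.-1 - i)%N) contrS_Fs leq_subr subKn ?(ltnW i_lt) //.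
  by rewrite subn_eq0 leqNgt i_lt /= addr0.
rewrite contrS_Fs; case: (posnP e) => [->|e_gt0]; first by rewrite subn0 leq0n topFBG.
by rewrite addr0; case: leqP => // e_le; apply: lowFB; lia.
Qed.

Lemma AnnR_piS_of_comb s ac : (2 <= n)%N -> (forall u, u \in ac -> u.1`_0 = 0) ->
  AnnS Fs (addS s (oppS (sumS [seq mulS (iotaS r u.1) u.2 | u <- ac]))) ->
  AnnR FB (piS s).
Proof.
move=> n_ge2 ac0 /AnnS_FsP[lowFB _] m; have := lowFB 0%N _ m.
rewrite tcoef_addS tcoef_oppS contrR_addR contrR_oppR contr_tcoef0_comb // subr0.
by apply; case: n n_ge2 => [|[]].
Qed.

Lemma contrR_G_of_free_extension : free_extension n Fs FB ->
  forall g, AnnR FB g -> exists f, forall m, contrR g G m = contrR f FB m.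
Proof.
case=> _ [_ ker_pi] g FBg.
have [|ac [ac0 Fs_gw]] := (ker_pi (liftR g)).1; first by rewrite piS_liftR.
set w := sumS _ in Fs_gw; move/AnnS_FsP: Fs_gw => [_ topFBG].
set d := tcoef n.-1 _ in topFBG; exists (oppR d) => m.
have := topFBG m; rewrite tcoef_addS tcoef_oppS contrR_addR contrR_oppR.
rewrite contr_tcoef0_comb // subr0 tcoef_liftR /= contrR_oppR => topFBG_m.
by apply: (addrI (contrR d FB m)); rewrite topFBG_m subrr.
Qed.

End Annihilator.

Lemma submx_trmx_of_ker (F : fieldType) m n (A : 'M[F]_(m, n)) (h : 'rV_m) :
  (forall u : 'rV_m, u *m A = 0 -> u *m h^T = 0) -> (h <= A^T)%MS.
Proof.
move=> kerA_h; rewrite submxE; apply/eqP.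
have cokerA : (cokermx A^T)^T *m A = 0.
  by rewrite -{2}[A]trmxK -trmx_mul mulmx_coker trmx0.
have cokerA_h : (cokermx A^T)^T *m h^T = 0.
  by apply/row_matrixP => i; rewrite row0 row_mul kerA_h // -row_mul cokerA row0.
by rewrite -[LHS]trmxK trmx_mul cokerA_h trmx0.
Qed.

Section Catalecticant.
Variables (k : fieldType) (r jB : nat) (FB : QR k r).
Hypothesis FB_homog : homogR jB FB.
Implicit Types (F H : QR k r) (p : Rpoly k r).

(* [FB] only sees the monomials with all exponents at most [jB]; they are
   enumerated through the finite type [smallmono]. *)
Definition small (m : mono r) := [forall i, (m i <= jB)%N].
Definition smallmono := {ffun 'I_r -> 'I_jB.+1}.
Definition nsmall := #|smallmono|.
Definition smallm (x : 'I_nsmall) : mono r :=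
  [ffun i => nat_of_ord ((enum_val x : smallmono) i)].

Lemma smallm_inj : injective smallm.
Proof.
move=> x y /ffunP e_xy; apply: enum_val_inj; apply/ffunP => i; apply/val_inj.
by have := e_xy i; rewrite !ffunE.
Qed.

Lemma small_smallm m : small m -> exists y, m = smallm y.
Proof.
move=> /forallP m_small; exists (enum_rank ([ffun i => inord (m i)] : smallmono)).
by apply/ffunP => i; rewrite /smallm enum_rankK !ffunE inordK // ltnS m_small.
Qed.

Lemma FB_madd_notsmall m a : ~~ small m -> FB (madd m a) = 0.
Proof.
move=> /forallPn[i m_i_gt]; apply: FB_homog; rewrite mdeg_madd.
have : (m i <= mdeg m)%N by rewrite /mdeg (bigD1 i) //= leq_addr.
lia.
Qed.

Lemma contrR_notsmall p m : ~~ small m -> contrR p FB m = 0.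
Proof. by move=> m_big; apply: big1 => u _; rewrite FB_madd_notsmall // mulr0. Qed.

Lemma eq_QR_small F H : (forall m, ~~ small m -> F m = 0) ->
  (forall m, ~~ small m -> H m = 0) -> (forall y, F (smallm y) = H (smallm y)) ->
  forall m, F m = H m.
Proof.
move=> F0 H0 e_FH m; case: (boolP (small m)) => [/small_smallm[y ->] //|m_big].
by rewrite F0 ?H0.
Qed.

Definition catalecticant : 'M[k]_nsmall :=
  \matrix_(x, y) FB (madd (smallm x) (smallm y)).
Definition coefv p : 'rV[k]_nsmall := \row_x \sum_(u <- p | u.1 == smallm x) u.2.
Definition polyv (v : 'rV[k]_nsmall) : Rpoly k r :=
  [seq (smallm x, v 0 x) | x <- enum 'I_nsmall].

Lemma catalecticant_sym : catalecticant^T = catalecticant.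
Proof. by apply/matrixP => x y; rewrite !mxE maddC. Qed.

Lemma contrR_coefv p y : contrR p FB (smallm y) = (coefv p *m catalecticant) 0 y.
Proof.
rewrite !mxE /contrR.
under [RHS]eq_bigr => x _ do rewrite !mxE big_distrl /= big_mkcond /=.
rewrite exchange_big /=; apply: eq_bigr => u _.
case: (boolP (small u.1)) => [/small_smallm[z ->]|u_big]; last first.
  rewrite maddC FB_madd_notsmall // mulr0; apply/esym/big1 => x _.
  by case: eqP => // <-; rewrite FB_madd_notsmall ?mulr0.
rewrite (bigD1 z) //= eqxx big1 ?addr0; first by rewrite maddC.
move=> x x_neq; rewrite ifF //; apply/eqP => /smallm_inj e_zx.
by rewrite e_zx eqxx in x_neq.
Qed.

Lemma contrR_polyv v F m :
  contrR (polyv v) F m = \sum_x v 0 x * F (madd m (smallm x)).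
Proof. by rewrite /contrR /polyv big_map big_enum. Qed.

Lemma contrR_polyv_catalecticant v y :
  contrR (polyv v) FB (smallm y) = (v *m catalecticant) 0 y.
Proof. by rewrite contrR_polyv mxE; apply: eq_bigr => x _; rewrite mxE maddC. Qed.

(* The values of [H] on small monomials are orthogonal to the left kernel of the
   symmetric catalecticant matrix, hence lie in its row space. *)
Lemma contrR_of_AnnR_sub H : (forall p, AnnR FB p -> AnnR H p) ->
  exists f, forall m, H m = contrR f FB m.
Proof.
move=> AnnH.
have H0 m : ~~ small m -> H m = 0.
  move=> m_big; have := AnnH [:: (m, 1)] _ (m0 r).
  rewrite /contrR big_seq1 mul1r madd0l => -> // m'.
  by rewrite /contrR big_seq1 mul1r maddC FB_madd_notsmall.
pose h : 'rV[k]_nsmall := \row_x H (smallm x).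
have /submxP[q e_h] : (h <= catalecticant)%MS.
  rewrite -[X in (_ <= X)%MS]catalecticant_sym; apply: submx_trmx_of_ker => u u_ker.
  have AnnFB_u : AnnR FB (polyv u).
    apply: eq_QR_small => [m m_big|//|y]; first by rewrite contrR_notsmall.
    by rewrite contrR_polyv_catalecticant u_ker mxE.
  apply/rowP => z; rewrite ord1 !mxE -[RHS](AnnH _ AnnFB_u (m0 r)) contrR_polyv.
  by apply: eq_bigr => x _; rewrite !mxE madd0l.
exists (polyv q); apply: eq_QR_small => [//|m m_big|y].
  by rewrite contrR_notsmall.
by rewrite contrR_polyv_catalecticant -e_h mxE.
Qed.

(* [basisQ *m catalecticant = row_base catalecticant]: the [basisR j o FB] form a
   basis of [R o FB]. *)
Definition basisQ : 'M[k]_(\rank catalecticant, nsmall) :=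
  row_base catalecticant *m pinvmx catalecticant.
Definition basisR (j : 'I_(\rank catalecticant)) : Rpoly k r := polyv (row j basisQ).
Definition combR (al : 'rV[k]_(\rank catalecticant)) : Rpoly k r :=
  polyv (al *m basisQ).
Definition coordR p : 'rV[k]_(\rank catalecticant) :=
  coefv p *m catalecticant *m pinvmx (row_base catalecticant).

Lemma basisQ_catalecticant : basisQ *m catalecticant = row_base catalecticant.
Proof. by rewrite /basisQ mulmxKpV // eq_row_base. Qed.

Lemma contrR_combR al F m :
  contrR (combR al) F m = \sum_j al 0 j * contrR (basisR j) F m.
Proof.
rewrite contrR_polyv; under eq_bigr => x _ do rewrite mxE big_distrl.
rewrite exchange_big /=; apply: eq_bigr => j _.
by rewrite contrR_polyv mulr_sumr; apply: eq_bigr => x _; rewrite !mxE mulrA.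
Qed.

Lemma contrR_combR_coordR p m : contrR (combR (coordR p)) FB m = contrR p FB m.
Proof.
apply: eq_QR_small m => [m m_big|m m_big|y]; try by rewrite contrR_notsmall.
rewrite contrR_polyv_catalecticant contrR_coefv -mulmxA basisQ_catalecticant.
by rewrite mulmxKpV // eq_row_base submxMl.
Qed.

Lemma contrR_coordR p m :
  contrR p FB m = \sum_j coordR p 0 j * contrR (basisR j) FB m.
Proof. by rewrite -contrR_combR contrR_combR_coordR. Qed.

Lemma basisR_free (al : 'I_(\rank catalecticant) -> k) :
  (forall m, \sum_j al j * contrR (basisR j) FB m = 0) -> forall j, al j = 0.
Proof.
move=> al0 j; pose alv := \row_j al j.
have : alv *m row_base catalecticant = 0 *m row_base catalecticant.
  apply/rowP => y; rewrite mul0mx [RHS]mxE -[RHS](al0 (smallm y)).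
  rewrite -basisQ_catalecticant mulmxA -contrR_polyv_catalecticant -/(combR alv).
  rewrite contrR_combR.
  by apply: eq_bigr => i _; rewrite mxE.
by move/(row_free_inj (row_base_free catalecticant))/rowP/(_ j); rewrite !mxE.
Qed.

End Catalecticant.

Lemma sqIdeal_AnnRP (k : fieldType) (r jB : nat) (FB G : QR k r) : homogR jB FB ->
  (forall h, sqIdeal (AnnR FB) h -> AnnR G h) <->
  (forall g, AnnR FB g -> exists f, forall m, contrR g G m = contrR f FB m).
Proof.
move=> FB_homog; split=> [sqG g FBg|]; last exact: sqIdeal_AnnR.
apply: (contrR_of_AnnR_sub FB_homog) => p FBp m.
have sq_pg : sqIdeal (AnnR FB) (addR (mulR p g) [::]).
  by exists [:: (p, g)]; split=> // u; rewrite inE => /eqP -> /=.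
by have := sqG _ sq_pg m; rewrite /addR cats0 contrR_mulR.
Qed.

Lemma Xn_dvdp (R : idomainType) n (p : {poly R}) :
  (forall i, (i < n)%N -> p`_i = 0) -> 'X^n %| p.
Proof.
move=> p_low; apply/modp_eq0P; rewrite -Pdiv.IdomainMonic.take_poly_modp.
by apply/polyP => i; rewrite coef_take_poly coef0; case: ifP => // /p_low.
Qed.

Lemma map_nth_enum_ord (T : Type) (x0 : T) (a : seq T) m :
  size a = m -> [seq nth x0 a (val j) | j <- enum 'I_m] = a.
Proof. by move=> <-; rewrite -[RHS](mkseq_nth x0) /mkseq -val_enum_ord -map_comp. Qed.

Section FreeExtension.
Variables (k : fieldType) (r n jB : nat) (FB G : QR k r).
Hypotheses (n_ge2 : (2 <= n)%N) (FB_homog : homogR jB FB).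
Hypothesis IG_sub :
  forall g, AnnR FB g -> exists f, forall m, contrR g G m = contrR f FB m.

Local Notation b := (\rank (catalecticant jB FB)).
Local Notation basisR := (@basisR k r jB FB).
Local Notation combR := (@combR k r jB FB).
Local Notation coordR := (@coordR k r jB FB).

Definition basisS : seq (Spoly k r) := [seq liftR (basisR j) | j <- enum 'I_b].
Definition combS (a : 'I_b -> {poly k}) : Spoly k r :=
  sumS [seq mulS (iotaS r (a j)) (liftR (basisR j)) | j <- enum 'I_b].

Lemma zip_basisS_combS (a : 'I_b -> {poly k}) :
  sumS [seq mulS (iotaS r u.1) u.2 | u <- zip [seq a j | j <- enum 'I_b] basisS] =
  combS a.
Proof. by rewrite /basisS zip_map -map_comp. Qed.

Lemma contr_tcoef_combS i a F m :
  contrR (tcoef i (combS a)) F m = \sum_j (a j)`_i * contrR (basisR j) F m.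
Proof.
rewrite contr_tcoef_sumS big_map big_enum /=; apply: eq_bigr => j _.
exact: contr_tcoef_iotaS_liftR.
Qed.

Lemma combS_coef_eq0 a :
  AnnS (Fs n FB G) (combS a) -> forall j i, (i < n)%N -> (a j)`_i = 0.
Proof.
move=> /AnnS_FsP[low top] j i i_lt.
have low_eq0 i' : (i' < n.-1)%N -> forall j, (a j)`_i' = 0.
  move=> i'_lt; apply: (@basisR_free _ _ jB FB (fun j => (a j)`_i')) => m.
  by rewrite -contr_tcoef_combS; apply: low.
have [/low_eq0 -> //|i_ge] := ltnP i n.-1.
have -> : i = n.-1 by lia.
move: j; apply: (@basisR_free _ _ jB FB (fun j => (a j)`_n.-1)) => m.
have := top m.
rewrite !contr_tcoef_combS [X in _ + X]big1 ?addr0 // => j _.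
by rewrite low_eq0 ?mul0r //; lia.
Qed.

(* The coefficients of [t^i], [i < n], are the coordinates of the [t^i]-component of
   [s]; the coefficient of [t^(n-1)] also absorbs the [G]-contraction of the residue
   of the constant component, which lies in [R o FB] by [IG_sub]. *)
Lemma basisS_spanning s : exists a, AnnS (Fs n FB G) (addS s (oppS (combS a))).
Proof.
have FB_res : AnnR FB (addR (tcoef 0 s) (oppR (combR (coordR (tcoef 0 s))))).
  by move=> m; rewrite contrR_addR contrR_oppR (contrR_combR_coordR FB_homog) subrr.
have [f Gres] := IG_sub FB_res.
pose a j := \poly_(i < n) coordR (tcoef i s) 0 j + (coordR f 0 j)%:P * 'X^(n.-1).
have coef_a j i : (a j)`_i = (if (i < n)%N then coordR (tcoef i s) 0 j else 0)
    + (if i == n.-1 then coordR f 0 j else 0).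
  by rewrite coefD coef_poly coefCM coefXn mulr_natr mulrb.
have n1_lt : (n.-1 < n)%N by case: n n_ge2.
exists a; apply/AnnS_FsP; split=> [i i_lt m|m].
  rewrite tcoef_addS tcoef_oppS contrR_addR contrR_oppR contr_tcoef_combS.
  rewrite (contrR_coordR FB_homog (tcoef i s)); apply/eqP; rewrite subr_eq0; apply/eqP.
  by apply: eq_bigr => j _; rewrite coef_a ltn_eqF // addr0 (ltn_trans i_lt).
rewrite !tcoef_addS !tcoef_oppS !contrR_addR !contrR_oppR !contr_tcoef_combS.
have -> : \sum_j (a j)`_n.-1 * contrR (basisR j) FB m =
    contrR (tcoef n.-1 s) FB m + contrR f FB m.
  rewrite (contrR_coordR FB_homog (tcoef n.-1 s)) (contrR_coordR FB_homog f).
  by rewrite -big_split; apply: eq_bigr => j _; rewrite coef_a n1_lt eqxx mulrDl.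
have -> : \sum_j (a j)`_0 * contrR (basisR j) G m =
    contrR (combR (coordR (tcoef 0 s))) G m.
  rewrite contrR_combR; apply: eq_bigr => j _.
  by rewrite coef_a (leq_ltn_trans (leq0n _) n1_lt) ifF ?addr0 //; lia.
have := Gres m; rewrite contrR_addR contrR_oppR => ->.
by rewrite opprD addrA subrr add0r addNr.
Qed.

Lemma combS_coef0 s a : AnnS (Fs n FB G) (addS s (oppS (combS a))) ->
  AnnR FB (piS s) -> forall j, (a j)`_0 = 0.
Proof.
move=> /AnnS_FsP[low _] pi_s; apply: (@basisR_free _ _ jB FB (fun j => (a j)`_0)) => m.
have n1_gt0 : (0 < n.-1)%N by case: n n_ge2 => [|[]].
have := low 0%N n1_gt0 m; rewrite tcoef_addS tcoef_oppS contrR_addR contrR_oppR.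
by rewrite contr_tcoef_combS (pi_s m) sub0r => /eqP; rewrite oppr_eq0 => /eqP.
Qed.

Lemma free_extension_Fs : free_extension n (Fs n FB G) FB.
Proof.
split; [exists basisS; split|split].
- move=> s; have [a Fs_sa] := basisS_spanning s.
  by exists [seq a j | j <- enum 'I_b]; rewrite !size_map zip_basisS_combS.
- move=> a; rewrite size_map size_enum_ord => size_a.
  rewrite -(map_nth_enum_ord 0 size_a) zip_basisS_combS => /combS_coef_eq0 a_low p.
  by case/mapP=> j _ ->; apply: Xn_dvdp; apply: a_low.
- by move=> q; exists (liftR q) => m; rewrite piS_liftR contrR_addR contrR_oppR subrr.
move=> s; split=> [pi_s|[ac [ac0 Fs_s]]]; last exact: AnnR_piS_of_comb n_ge2 ac0 Fs_s.
have [a Fs_sa] := basisS_spanning s.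
exists (zip [seq a j | j <- enum 'I_b] basisS); rewrite zip_basisS_combS; split=> // u.
by rewrite /basisS zip_map => /mapP[j _ ->]; apply: combS_coef0 Fs_sa pi_s j.
Qed.

End FreeExtension.

Unset Implicit Arguments.
Theorem corollary2p5 (k : fieldType) (r n jB : nat) (FB G : QR k r) :
  (2 <= n)%N ->
  homogR jB FB ->
  homogR (jB + n - 1) G ->
  free_extension n
    (fun m e => (if e == n.-1 then FB m else 0) + (if e == 0%N then G m else 0))
    FB
  <-> (forall h, sqIdeal (AnnR FB) h -> AnnR G h).
Proof.
move=> n_ge2 FB_homog _; rewrite (sqIdeal_AnnRP G FB_homog).
split; first exact: contrR_G_of_free_extension.
by move=> IG_sub; apply: free_extension_Fs n_ge2 FB_homog IG_sub.
Qed.
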